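(* Let $\beta\in\mathcal{A}$ and let $f=\sum_{\alpha\in\mathcal{A}}c_\alpha\mathrm{e}^\alpha\in C_X(\mathcal{A},\beta)$ with $c_\beta<0$. If a nonzero $\nu\in\mathbb{R}^{\mathcal{A}}$ satisfies $\mathbf{1}^T\nu=0$ and $\sigma_X(-\mathcal{A}\nu)+D(\nu_{\setminus\beta},e\,c_{\setminus\beta})\le c_\beta$, but $\nu$ is not an $X$-circuit of $\mathcal{A}$, then $f$ does not generate an extreme ray of $C_X(\mathcal{A},\beta)$.
   Context: $X\subset\mathbb{R}^n$ is a nonempty closed convex set and $\mathcal{A}\subset\mathbb{R}^n$ is a nonempty finite set such that the functions $x\mapsto\exp(\alpha^Tx)$, $\alpha\in\mathcal{A}$, are linearly independent on $X$. $\mathbb{R}^{\mathcal{A}}$ denotes real vectors indexed by $\mathcal{A}$; $c_{\setminus\beta}$ deletes the $\beta$-entry of $c$. $\mathcal{A}\nu=\sum_{\alpha}\alpha\nu_\alpha$. $\sigma_X(y)=\sup\{y^Tx:x\in X\}$. $N_\beta=\{\nu\in\mathbb{R}^{\mathcal{A}}:\nu_\alpha\ge0\ \forall\alpha\neq\beta,\ \sum_\alpha\nu_\alpha=0\}$. A vector $\nu^\star\in N_\beta$ is an $X$-circuit of $\mathcal{A}$ if (1) $\nu^\star\neq0$, (2) $\sigma_X(-\mathcal{A}\nu^\star)<\infty$, and (3) $\nu^\star$ cannot be written as a convex combination of two non-proportional vectors $\nu^{(1)},\nu^{(2)}\in N_\beta$ such that the map $\nu\mapsto\sigma_X(-\mathcal{A}\nu)$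 is affine on the segment $[\nu^{(1)},\nu^{(2)}]$. A signomial supported on $\mathcal{A}$ is $f=\sum_{\alpha}c_\alpha\mathrm{e}^\alpha$ with $\mathrm{e}^\alpha(x)=\exp(\alpha^Tx)$, identified with $c$. The $X$-AGE cone $C_X(\mathcal{A},\beta)$ is the set of signomials supported on $\mathcal{A}$ that are nonnegative on $X$ with $c_\alpha\ge0$ for all $\alpha\ne\beta$. The relative entropy is $D(\nu,c)=\sum_\alpha\nu_\alpha\log(\nu_\alpha/c_\alpha)$, continuously extended to nonnegative arguments, and $+\infty$ if $\nu$ or $c$ has a negative entry; $e$ is Euler's number. *)

From HB Require Import structures.
From mathcomp Require Import all_boot all_order all_algebra.
From mathcomp Require Import all_classical all_reals all_analysis.
Set Implicit Arguments. Unset Strict Implicit. Unset Printing Implicit Defensive.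
Import Order.TTheory GRing.Theory Num.Theory.
Import numFieldNormedType.Exports.
Local Open Scope classical_set_scope.
Local Open Scope ring_scope.

Definition dotv (R : realType) (n : nat) (a x : 'rV[R]_n) : R :=
  \sum_(k < n) a 0 k * x 0 k.

Definition supp_fun (R : realType) (n : nat) (X : set 'rV[R]_n) (y : 'rV[R]_n)
  : \bar R := ereal_sup [set (dotv y x)%:E | x in X].

(* The exponent set A is given as an injective family alpha : I -> R^n over a
   finite index type I; vectors in R^A are functions I -> R. *)
Definition Amul (R : realType) (n : nat) (I : finType) (alpha : I -> 'rV[R]_n)
  (nu : I -> R) : 'rV[R]_n := \sum_i nu i *: alpha i.

Definition signomial (R : realType) (n : nat) (I : finType) (alpha : I -> 'rV[R]_n)
  (c : I -> R) (x : 'rV[R]_n) : R := \sum_i c i * expR (dotv (alpha i) x).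

Definition exp_lin_indep (R : realType) (n : nat) (I : finType)
  (alpha : I -> 'rV[R]_n) (X : set 'rV[R]_n) : Prop :=
  forall c : I -> R, (forall x, X x -> signomial alpha c x = 0) -> forall i, c i = 0.

Definition Nbeta (R : realType) (I : finType) (b : I) (nu : I -> R) : Prop :=
  (forall i, i != b -> 0 <= nu i) /\ \sum_i nu i = 0.

Definition AGE_cone (R : realType) (n : nat) (I : finType) (alpha : I -> 'rV[R]_n)
  (X : set 'rV[R]_n) (b : I) (c : I -> R) : Prop :=
  (forall i, i != b -> 0 <= c i) /\ (forall x, X x -> 0 <= signomial alpha c x).

Definition proportional (R : realType) (I : finType) (u v : I -> R) : Prop :=
  (exists t : R, u = (fun i => t * v i)) \/ (exists t : R, v = (fun i => t * u i)).

Definition affine_on_segment (R : realType) (n : nat) (I : finType)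
  (alpha : I -> 'rV[R]_n) (X : set 'rV[R]_n) (nu1 nu2 : I -> R) : Prop :=
  exists a b : R, forall t : R, 0 <= t -> t <= 1 ->
    supp_fun X (- Amul alpha (fun i => t * nu1 i + (1 - t) * nu2 i)) = (a * t + b)%:E.

Definition X_circuit (R : realType) (n : nat) (I : finType) (alpha : I -> 'rV[R]_n)
  (X : set 'rV[R]_n) (b : I) (nu : I -> R) : Prop :=
  [/\ Nbeta b nu,
      nu <> (fun _ => 0),
      (supp_fun X (- Amul alpha nu) < +oo)%E &
      ~ (exists (nu1 nu2 : I -> R) (lam : R),
           [/\ Nbeta b nu1 /\ Nbeta b nu2, ~ proportional nu1 nu2,
               0 < lam < 1,
               nu = (fun i => lam * nu1 i + (1 - lam) * nu2 i) &
               affine_on_segment alpha X nu1 nu2])].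

(* one term x log(x/y) of the relative entropy, continuously extended,
   +oo when an argument is negative *)
Definition relent_term (R : realType) (x y : R) : \bar R :=
  if (x < 0) || (y < 0) then +oo%E
  else if x == 0 then 0%E
  else if y == 0 then +oo%E
  else (x * ln (x / y))%:E.

Definition relent_del (R : realType) (I : finType) (b : I) (nu c : I -> R) : \bar R :=
  (\sum_(i | i != b) relent_term (nu i) (expR 1 * c i))%E.

Definition extreme_ray (R : realType) (I : finType) (K : (I -> R) -> Prop)
  (f : I -> R) : Prop :=
  [/\ K f, f <> (fun _ => 0) &
      forall g h, K g -> K h -> f = (fun i => g i + h i) ->
        (exists2 t : R, 0 <= t & g = (fun i => t * f i)) /\
        (exists2 t : R, 0 <= t & h = (fun i => t * f i))].

From HB Require Import structures.
From mathcomp Require Import all_boot all_order all_algebra.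
From mathcomp Require Import all_classical all_reals all_analysis.
From mathcomp Require Import ring lra.
Set Implicit Arguments. Unset Strict Implicit. Unset Printing Implicit Defensive.
Import Order.TTheory GRing.Theory Num.Theory.
Import numFieldNormedType.Exports.
Local Open Scope classical_set_scope.
Local Open Scope ring_scope.

(* 1. An AGE certificate suffices for nonnegativity: if mu lies in N_beta,
      dotv(-A mu) x <= s on X and s + D(mu_{\beta}, e d_{\beta}) <= d_beta,
      then sum_i d_i exp(alpha_i^T x) >= 0 on X.  This is the pointwise
      inequality m u - m ln(m/(e d)) <= d exp u (Fenchel-Young for x log x)
      summed over i != beta.
   2. Finiteness of the hypothesis forces nu in N_beta, supp nu within supp c,
      and turns the relative entropy into a finite real sum.
   3. Since nu is not an X-circuit it is a proper convex combination
      lam nu1 + (1 - lam) nu2 on whose segment sigma_X(-A .) is affine, so the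
      bounds of nu1 and nu2 combine exactly to sigma_X(-A nu).  Splitting each
      entry c_i in the ratio lam nu1_i : (1 - lam) nu2_i, and c_beta according
      to the two certificates, writes c = c1 + c2 with c1, c2 in the cone.
   4. Extremality would force c1 = t c, hence lam nu1 = t nu, making nu1 and
      nu2 proportional: a contradiction. *)

Lemma dotv_negAmul (R : realType) (n : nat) (I : finType)
  (alpha : I -> 'rV[R]_n) (mu : I -> R) (x : 'rV[R]_n) :
  dotv (- Amul alpha mu) x = - \sum_i mu i * dotv (alpha i) x.
Proof.
rewrite /dotv /Amul.
under eq_bigr do rewrite mxE summxE mulNr mulr_suml.
rewrite sumrN; congr (- _).
rewrite exchange_big /=; apply: eq_bigr => i _.
rewrite mulr_sumr; apply: eq_bigr => k _.
by rewrite mxE mulrA.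
Qed.

Lemma dotv_negAmul_scale (R : realType) (n : nat) (I : finType)
  (alpha : I -> 'rV[R]_n) (k : R) (mu : I -> R) (x : 'rV[R]_n) :
  dotv (- Amul alpha (fun i => k * mu i)) x = k * dotv (- Amul alpha mu) x.
Proof.
rewrite !dotv_negAmul mulrN mulr_sumr; congr (- _).
by apply: eq_bigr => i _; rewrite mulrA.
Qed.

Lemma dotv_le_supp_fun (R : realType) (n : nat) (X : set 'rV[R]_n)
  (y x : 'rV[R]_n) : X x -> ((dotv y x)%:E <= supp_fun X y)%E.
Proof. by move=> Xx; apply: ereal_sup_ubound; exists x. Qed.

Lemma supp_fun_neqNy (R : realType) (n : nat) (X : set 'rV[R]_n)
  (y : 'rV[R]_n) : X !=set0 -> supp_fun X y != -oo%E.
Proof.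
case=> x Xx; apply/negP => /eqP hS.
by have := dotv_le_supp_fun y Xx; rewrite hS.
Qed.

Lemma affine_segment_bounds (R : realType) (n : nat) (X : set 'rV[R]_n)
  (I : finType) (alpha : I -> 'rV[R]_n) (nu1 nu2 : I -> R) :
  affine_on_segment alpha X nu1 nu2 ->
  exists s1 s2 : R,
  [/\ forall x, X x -> dotv (- Amul alpha nu1) x <= s1,
      forall x, X x -> dotv (- Amul alpha nu2) x <= s2 &
      forall lam, 0 <= lam -> lam <= 1 ->
        supp_fun X (- Amul alpha (fun i => lam * nu1 i + (1 - lam) * nu2 i))
        = (lam * s1 + (1 - lam) * s2)%:E].
Proof.
case=> a [s haff]; exists (a + s), s; split.
- move=> x Xx; have := dotv_le_supp_fun (- Amul alpha nu1) Xx.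
  have -> : nu1 = (fun i => 1 * nu1 i + (1 - 1) * nu2 i).
    by apply/funext => i; rewrite subrr mul0r addr0 mul1r.
  by rewrite haff ?ler01 // mulr1 lee_fin.
- move=> x Xx; have := dotv_le_supp_fun (- Amul alpha nu2) Xx.
  have -> : nu2 = (fun i => 0 * nu1 i + (1 - 0) * nu2 i).
    by apply/funext => i; rewrite subr0 mul0r add0r mul1r.
  by rewrite haff ?ler01 ?lexx // mulr0 add0r lee_fin.
- by move=> lam l0 l1; rewrite haff //; congr (_%:E); ring.
Qed.

(* Fenchel-Young inequality for the entropy x log x, in the form used to
   bound one exponential term of a signomial from below. *)
Lemma entropy_young (R : realType) (m d u : R) :
  0 <= m -> 0 <= d -> (0 < m -> 0 < d) ->
  m * u - m * ln (m / (expR 1 * d)) <= d * expR u.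
Proof.
move=> hm hd hmd.
have [->|m0] := eqVneq m 0.
  by rewrite !mul0r subrr mulr_ge0 // expR_ge0.
have mp : 0 < m by rewrite lt_neqAle eq_sym m0.
have dp := hmd mp.
set z := d * expR u.
have zp : 0 < z by rewrite mulr_gt0 // expR_gt0.
have ln_ratio : ln (m / (expR 1 * d)) = ln m - (1 + ln d).
  rewrite ln_div ?posrE ?mulr_gt0 ?expR_gt0 //.
  by rewrite lnM ?posrE ?expR_gt0 // expRK.
have ln_zm : ln (z / m) = ln d + u - ln m.
  by rewrite ln_div ?posrE ?mulr_gt0 ?expR_gt0 // lnM ?posrE ?expR_gt0 // expRK.
have ln_le : ln (z / m) <= z / m - 1.
  have := @le_ln1Dx R (z / m - 1).
  rewrite addrCA subrr addr0; apply.
  by rewrite ltrBrDl subrr divr_gt0.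
have m_ln_le : m * ln (z / m) <= z - m.
  have := ler_wpM2l (ltW mp) ln_le.
  by rewrite mulrBr mulr1 mulrCA divff // mulr1.
rewrite ln_ratio; rewrite ln_zm in m_ln_le; lra.
Qed.

Lemma AGE_certificate (R : realType) (n : nat) (X : set 'rV[R]_n) (I : finType)
  (alpha : I -> 'rV[R]_n) (b : I) (d mu : I -> R) (s : R) :
  (forall i, i != b -> 0 <= d i) ->
  Nbeta b mu ->
  (forall i, i != b -> 0 < mu i -> 0 < d i) ->
  (forall x, X x -> dotv (- Amul alpha mu) x <= s) ->
  s + \sum_(i | i != b) mu i * ln (mu i / (expR 1 * d i)) <= d b ->
  forall x, X x -> 0 <= signomial alpha d x.
Proof.
move=> hd [hmu hsum] hmd hs hD x Xx.
set y := fun i => dotv (alpha i) x.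
have hsx := hs x Xx; rewrite dotv_negAmul -/y in hsx.
have young : \sum_(i | i != b) (mu i * (y i - y b) - mu i * ln (mu i / (expR 1 * d i)))
   <= \sum_(i | i != b) d i * expR (y i - y b).
  by apply: ler_sum => i ib; apply: entropy_young; auto.
rewrite sumrB in young.
have centred : \sum_(i | i != b) mu i * (y i - y b) = \sum_i mu i * y i.
  have full : \sum_i mu i * (y i - y b) = \sum_i mu i * y i.
    under eq_bigr do rewrite mulrBr.
    by rewrite sumrB -mulr_suml hsum mul0r subr0.
  by rewrite -full [RHS](bigD1 b) //= subrr mulr0 add0r.
rewrite centred in young.
have hpos : 0 <= d b + \sum_(i | i != b) d i * expR (y i - y b) by lra.
rewrite /signomial (bigD1 b) //=.
have -> : \sum_(i | i != b) d i * expR (dotv (alpha i) x)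
   = (\sum_(i | i != b) d i * expR (y i - y b)) * expR (y b).
  rewrite mulr_suml; apply: eq_bigr => i _.
  by rewrite -mulrA -expRD subrK.
by rewrite -mulrDl mulr_ge0 // expR_ge0.
Qed.

Lemma relent_term_neqNy (R : realType) (x y : R) : relent_term x y != -oo%E.
Proof. by rewrite /relent_term; repeat case: ifP. Qed.

Lemma relent_del_neqNy (R : realType) (I : finType) (b : I) (nu c : I -> R) :
  relent_del b nu c != -oo%E.
Proof.
apply/negP => /eqP /esum_eqNyP [i [_ _ /eqP]].
by rewrite (negbTE (relent_term_neqNy _ _)).
Qed.

Lemma relent_del_fin (R : realType) (I : finType) (b : I) (nu c : I -> R) :
  (forall i, i != b -> 0 <= c i) -> relent_del b nu c != +oo%E ->
  [/\ forall i, i != b -> 0 <= nu i,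
      forall i, i != b -> 0 < nu i -> 0 < c i &
      relent_del b nu c = (\sum_(i | i != b) nu i * ln (nu i / (expR 1 * c i)))%:E].
Proof.
move=> hc hDy.
have ht i : i != b -> relent_term (nu i) (expR 1 * c i) != +oo%E.
  move=> ib; apply/negP => /eqP hi; move/negP: hDy; apply.
  apply/eqP; apply/esum_eqyP; first by move=> j _; exact: relent_term_neqNy.
  by exists i; split => //; rewrite mem_index_enum.
have hnu i : i != b -> 0 <= nu i.
  move=> ib; have := ht i ib; rewrite /relent_term.
  by case: ifPn => //; rewrite negb_or -leNgt => /andP[].
have hnc i : i != b -> 0 < nu i -> 0 < c i.
  move=> ib nup; have := ht i ib; rewrite /relent_term.
  rewrite ltNge (ltW nup) /= (gt_eqF nup).
  case: ifPn => // _; case: ifPn => // hne _.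
  rewrite lt_neqAle hc // andbT; apply/negP => /eqP c0.
  by move: hne; rewrite -c0 mulr0 eqxx.
split => //.
rewrite /relent_del -sumEFin; apply: eq_bigr => i ib.
rewrite /relent_term.
have [n0|nup] := eqVneq (nu i) 0.
  by rewrite n0 ltxx /= mul0r ltNge mulr_ge0 ?expR_ge0 ?hc.
have np : 0 < nu i by rewrite lt_neqAle eq_sym nup hnu.
have ecp : 0 < expR 1 * c i by rewrite mulr_gt0 ?expR_gt0 ?hnc.
by rewrite ltNge (ltW np) /= ltNge (ltW ecp) /= (gt_eqF ecp).
Qed.

Lemma proportional_of_scaled_piece (R : realType) (I : finType)
  (nu nu1 nu2 : I -> R) (lam t : R) :
  0 < lam < 1 -> (forall i, nu i = lam * nu1 i + (1 - lam) * nu2 i) ->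
  (fun i => lam * nu1 i) = (fun i => t * nu i) -> proportional nu1 nu2.
Proof.
move=> /andP[l0 l1] hnu ht.
have hall i : lam * nu1 i = t * nu i by exact: (congr1 (fun f => f i) ht).
have l0' : lam != 0 by rewrite gt_eqF.
have l1' : 1 - lam != 0 by rewrite gt_eqF // subr_gt0.
have [t0|tn0] := eqVneq t 0.
  left; exists 0; apply/funext => i; rewrite mul0r.
  by have := hall i; rewrite t0 mul0r => /eqP; rewrite mulf_eq0 (negbTE l0') => /eqP.
right; exists ((1 - t) * lam / ((1 - lam) * t)); apply/funext => i.
have e2 : nu2 i = (nu i - lam * nu1 i) / (1 - lam) by rewrite hnu; field.
have e1 : nu i = lam * nu1 i / t by rewrite hall; field.
by rewrite e2 e1; field; rewrite tn0 l1'.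
Qed.

Section ConeSplitting.
Variables (R : realType) (n : nat) (X : set 'rV[R]_n) (I : finType).
Variables (alpha : I -> 'rV[R]_n) (b : I) (c nu : I -> R).
Hypothesis hc : forall i, i != b -> 0 <= c i.
Hypothesis hsupp : forall i, i != b -> 0 < nu i -> 0 < c i.

Lemma entropy_term_rescale (i : I) (mu d : I -> R) :
  i != b -> 0 <= mu i <= nu i -> (0 < nu i -> d i = c i * mu i / nu i) ->
  mu i * ln (mu i / (expR 1 * d i)) = mu i * ln (nu i / (expR 1 * c i)).
Proof.
move=> ib /andP[m0 mnu] hd.
have [->|mn0] := eqVneq (mu i) 0; first by rewrite !mul0r.
have mp : 0 < mu i by rewrite lt_neqAle eq_sym mn0.
have np : 0 < nu i by apply: lt_le_trans mnu.
have cp := hsupp ib np.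
have e0 : expR 1 != 0 :> R by rewrite gt_eqF // expR_gt0.
rewrite hd //; congr (_ * ln _); field; rewrite ?gt_eqF //.
Qed.

Lemma piece_in_cone (mu d : I -> R) (s : R) :
  (forall i, i != b -> 0 <= mu i <= nu i) -> \sum_i mu i = 0 ->
  (forall x, X x -> dotv (- Amul alpha mu) x <= s) ->
  (forall i, i != b -> 0 <= d i) ->
  (forall i, i != b -> 0 < nu i -> d i = c i * mu i / nu i) ->
  s + \sum_(i | i != b) mu i * ln (nu i / (expR 1 * c i)) <= d b ->
  AGE_cone alpha X b d.
Proof.
move=> hmu hsum hs hd hdef hbudget; split=> //.
apply: (AGE_certificate (b := b) (mu := mu) (s := s)) => //.
- by split=> // i ib; case/andP: (hmu i ib).
- move=> i ib mp; have np : 0 < nu i by case/andP: (hmu i ib) => _; exact: lt_le_trans.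
  by rewrite hdef // !divr_gt0 ?mulr_gt0 ?hsupp.
- by under eq_bigr => i ib do rewrite (entropy_term_rescale ib (hmu i ib) (hdef i ib)).
Qed.

Lemma piece_proportional (mu d : I -> R) (t : R) :
  (forall i, i != b -> 0 <= mu i <= nu i) -> \sum_i mu i = 0 -> \sum_i nu i = 0 ->
  (forall i, i != b -> 0 < nu i -> d i = c i * mu i / nu i) ->
  d = (fun i => t * c i) -> mu = (fun i => t * nu i).
Proof.
move=> hmu hmsum hnsum hdef ht.
have off i : i != b -> mu i = t * nu i.
  move=> ib; have /andP[m0 mnu] := hmu i ib.
  have [np|] := ltP 0 (nu i).
    have cp := hsupp ib np.
    have := congr1 (fun f => f i) ht; rewrite /= hdef // => e.
    apply: (mulfI (lt0r_neq0 cp)); rewrite -(divfK (lt0r_neq0 np) (c i * mu i)) e; ring.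
  move=> n0; have nu0 : nu i = 0 by lra.
  by rewrite nu0 mulr0; lra.
apply/funext => i; have [->|ib] := eqVneq i b; last exact: off.
have centre (f : I -> R) : \sum_i f i = 0 -> f b = - \sum_(i | i != b) f i.
  by rewrite (bigD1 b) //= => h; lra.
by rewrite (centre _ hmsum) (centre _ hnsum) (eq_bigr _ off) -mulr_sumr mulrN.
Qed.

Lemma cone_split (nu1 nu2 : I -> R) (lam s1 s2 : R) :
  Nbeta b nu1 -> Nbeta b nu2 -> 0 < lam < 1 ->
  (forall i, nu i = lam * nu1 i + (1 - lam) * nu2 i) ->
  (forall x, X x -> dotv (- Amul alpha nu1) x <= s1) ->
  (forall x, X x -> dotv (- Amul alpha nu2) x <= s2) ->
  lam * s1 + (1 - lam) * s2
    + \sum_(i | i != b) nu i * ln (nu i / (expR 1 * c i)) <= c b ->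
  exists c1 c2 : I -> R,
  [/\ AGE_cone alpha X b c1, AGE_cone alpha X b c2,
      c = (fun i => c1 i + c2 i) &
      forall t, c1 = (fun i => t * c i) ->
        (fun i => lam * nu1 i) = (fun i => t * nu i)].
Proof.
move=> [N1 S1] [N2 S2] /andP[l0 l1] hnu hb1 hb2 hbudget.
set L := fun i => ln (nu i / (expR 1 * c i)).
set mu1 := fun i => lam * nu1 i.
set mu2 := fun i => (1 - lam) * nu2 i.
have hm1 i : i != b -> 0 <= mu1 i <= nu i.
  move=> ib; have := N1 i ib; have := N2 i ib; rewrite hnu /mu1; nra.
have hm2 i : i != b -> 0 <= mu2 i <= nu i.
  move=> ib; have := N1 i ib; have := N2 i ib; rewrite hnu /mu2; nra.
have split_entropy : \sum_(i | i != b) nu i * L i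
    = \sum_(i | i != b) mu1 i * L i + \sum_(i | i != b) mu2 i * L i.
  by rewrite -big_split /=; apply: eq_bigr => i _; rewrite /mu1 /mu2 -mulrDl -hnu.
have sum_mu1 : \sum_i mu1 i = 0 by rewrite -mulr_sumr S1 mulr0.
have sum_mu2 : \sum_i mu2 i = 0 by rewrite -mulr_sumr S2 mulr0.
have sum_nu : \sum_i nu i = 0.
  by rewrite (eq_bigr _ (fun i _ => hnu i)) big_split /= sum_mu1 sum_mu2 addr0.
pose c1 i := if i == b then lam * s1 + \sum_(j | j != b) mu1 j * L j
  else if 0 < nu i then c i * mu1 i / nu i else c i.
pose c2 i := c i - c1 i.
have c1_def i : i != b -> 0 < nu i -> c1 i = c i * mu1 i / nu i.
  by move=> ib np; rewrite /c1 (negbTE ib) np.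
have c2_def i : i != b -> 0 < nu i -> c2 i = c i * mu2 i / nu i.
  move=> ib np; rewrite /c2 c1_def //; apply: (mulIf (lt0r_neq0 np)).
  by rewrite mulrBl !divfK ?gt_eqF // -mulrBr {1}hnu /mu1 /mu2 addrC addKr.
exists c1, c2; split.
- apply: (piece_in_cone (mu := mu1) (s := lam * s1)) => //.
  + move=> x Xx; rewrite /mu1 dotv_negAmul_scale.
    by apply: ler_wpM2l; [exact: ltW | exact: hb1].
  + move=> i ib; rewrite /c1 (negbTE ib); case: ifP => np; last exact: hc.
    have /andP[m0 _] := hm1 i ib.
    by apply: divr_ge0 (ltW np); apply: mulr_ge0 (hc ib) m0.
  + by rewrite /c1 eqxx.
- apply: (piece_in_cone (mu := mu2) (s := (1 - lam) * s2)) => //.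
  + move=> x Xx; rewrite /mu2 dotv_negAmul_scale.
    by apply: ler_wpM2l; [rewrite subr_ge0 ltW | exact: hb2].
  + move=> i ib; have [np|nn] := ltP 0 (nu i).
      have /andP[m0 _] := hm2 i ib; rewrite c2_def //.
      by apply: divr_ge0 (ltW np); apply: mulr_ge0 (hc ib) m0.
    by rewrite /c2 /c1 (negbTE ib) ltNge nn subrr.
  + by rewrite /c2 /c1 eqxx; move: hbudget; rewrite split_entropy; lra.
- by apply/funext => i; rewrite /c2 subrKC.
- by move=> t; apply: (piece_proportional (d := c1)).
Qed.

End ConeSplitting.

Theorem theorem4p2 (R : realType) (n : nat) (X : set 'rV[R]_n)
  (I : finType) (alpha : I -> 'rV[R]_n)
  (hXne : X !=set0) (hXcl : closed X) (hXcv : convex_set X)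
  (halpha : injective alpha) (hlin : exp_lin_indep alpha X)
  (b : I) (c : I -> R) (hf : AGE_cone alpha X b c) (hcb : c b < 0)
  (nu : I -> R) (hnu0 : nu <> (fun _ => 0)) (hnusum : \sum_i nu i = 0)
  (hineq : (supp_fun X (- Amul alpha nu) + relent_del b nu c <= (c b)%:E)%E)
  (hncirc : ~ X_circuit alpha X b nu) :
  ~ extreme_ray (AGE_cone alpha X b) c.
Proof.
case=> _ _ hext.
have hc := hf.1.
have hSN := supp_fun_neqNy (- Amul alpha nu) hXne.
have hDy : relent_del b nu c != +oo%E.
  by apply/negP => /eqP hD; rewrite hD addey // in hineq.
have hSy : supp_fun X (- Amul alpha nu) != +oo%E.
  by apply/negP => /eqP hS; rewrite hS addye ?relent_del_neqNy in hineq.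
have [hnu hsupp hD] := relent_del_fin hc hDy.
have [nu1 [nu2 [lam [[N1 N2] nprop lam01 hnueq haff]]]] :
    exists (nu1 nu2 : I -> R) (lam : R),
    [/\ Nbeta b nu1 /\ Nbeta b nu2, ~ proportional nu1 nu2, 0 < lam < 1,
        nu = (fun i => lam * nu1 i + (1 - lam) * nu2 i) &
        affine_on_segment alpha X nu1 nu2].
  by apply: contrapT => nE; apply: hncirc; split; rewrite ?ltey.
have [s1 [s2 [hb1 hb2 hseg]]] := affine_segment_bounds haff.
have hnui i : nu i = lam * nu1 i + (1 - lam) * nu2 i by rewrite {1}hnueq.
have hS : supp_fun X (- Amul alpha nu) = (lam * s1 + (1 - lam) * s2)%:E.
  by case/andP: (lam01) => l0 l1; rewrite hnueq hseg ?ltW.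
rewrite hS hD -EFinD lee_fin in hineq.
have [c1 [c2 [hK1 hK2 hsplit hprop]]] :=
  cone_split hc hsupp N1 N2 lam01 hnui hb1 hb2 hineq.
have [[t _ ht] _] := hext c1 c2 hK1 hK2 hsplit.
exact: nprop (proportional_of_scaled_piece lam01 hnui (hprop t ht)).
Qed.
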